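(* Let $d\in\mathbb N$, $\varepsilon\in(0,1]$, and let $h=h(d,\varepsilon)$ be the height of Thiémard's partition as defined in the context. Let $r\in\{1,\dots,h\}$ and $\boldsymbol i,\boldsymbol j\in S^r$ with $i_\nu\le j_\nu$ for $\nu=1,\dots,r$, and assume both $Q^{(r)}_{\boldsymbol i}$ and $Q^{(r)}_{\boldsymbol j}$ are generated in the decomposition process. Then $$W(Q^{(r)}_{\boldsymbol i})\ge W(Q^{(r)}_{\boldsymbol j}),$$ and, if $W(Q^{(r)}_{\boldsymbol j})>\varepsilon$, $$\delta^{Q^{(r)}_{\boldsymbol i}}\ge \delta^{Q^{(r)}_{\boldsymbol j}}.$$ The first inequality is strict if and only if $i_\nu<j_\nu$ for some $\nu\in\{1,\dots,r-1\}$; the second inequality is strict if and only if $i_\nu<j_\nu$ for some $\nu\in\{1,\dots,r\}$.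
   Context: Fix $d\in\mathbb N$ and $\varepsilon\in(0,1]$. For $x,y\in[0,1]^d$ write $[x,y)=\prod_{i=1}^d[x_i,y_i)$ and define the weight $W([x,y))=\prod_{i=1}^d y_i-\prod_{i=1}^d x_i$. Thiémard's decomposition process generates boxes, each with a type in $\{1,\dots,d+1\}$. It starts with $I^d=[0,1)^d=[(0,\dots,0),(1,\dots,1))$, of type $1$. Whenever a generated box $P=[\alpha,\beta)$ has type $j\le d$ and $W(P)>\varepsilon$, it is decomposed (procedure DECOMPOSE$(P,j)$) as follows: put $$\delta^P=\left(\frac{\prod_{i=1}^d\beta_i-\varepsilon}{\prod_{i=1}^{j-1}\alpha_i\prod_{i=j}^d\beta_i}\right)^{1/(d-j+1)},\qquad \gamma^P_i=\alpha_i\ (i<j),\quad \gamma^P_i=\delta^P\beta_i\ (i\ge j).$$ The children of $P$ are the boxes $Q^P_k=[a^{(k)},b^{(k)})$ for $k=j,\dots,d$, where $a^{(k)}_i=\gamma^P_i$ for $i<k$, $a^{(k)}_i=\alpha_i$ for $i\ge k$, $b^{(k)}_k=\gamma^P_k$, $b^{(k)}_i=\beta_i$ for $i\neq k$; the box $Q^P_k$ has type $k$. In addition $P$ has the child $Q^P_{d+1}=[\gamma^P,\beta)$ of type $d+1$. A generated box of type $d+1$ or of weight at most $\varepsilon$ is not decomposed. (Known facts from Thiémard: $\delta^P\in(0,1)$; the process terminates after finitely many steps; $W(Q^P_{d+1})=\varepsilon$ and $W(Q^P_k)=\delta^PW(P)$ for $j\le k\le d$.) Indexing: for $r\in\mathbb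 N$ let $S^r=\{\boldsymbol i\in\mathbb N^r: 1\le i_1\le i_2\le\dots\le i_r\le d\}$, $S^0=\{0\}$, and $\mathbf 1_r=(1,\dots,1)\in\mathbb N^r$. Put $Q^{(0)}_0=I^d$, $Q^{(1)}_{j_1}=Q^{I^d}_{j_1}$ ($j_1=1,\dots,d$, defined when $W(I^d)>\varepsilon$), and for $\boldsymbol j\in S^r$ with $Q^{(r)}_{\boldsymbol j}$ generated and $W(Q^{(r)}_{\boldsymbol j})>\varepsilon$, $Q^{(r+1)}_{(\boldsymbol j,j_{r+1})}=Q^{Q^{(r)}_{\boldsymbol j}}_{j_{r+1}}$ for $j_{r+1}=j_r,\dots,d$. The height $h=h(d,\varepsilon)$ of the partition is $0$ if $W(I^d)\le\varepsilon$, and otherwise the largest $h\in\mathbb N$ such that there is $\boldsymbol j\in S^{h-1}$ with $Q^{(h-1)}_{\boldsymbol j}$ generated and $W(Q^{(h-1)}_{\boldsymbol j})>\varepsilon$. *)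

From mathcomp Require Import all_boot all_order all_algebra.
From mathcomp Require Import reals exp.
Set Implicit Arguments. Unset Strict Implicit. Unset Printing Implicit Defensive.
Import Order.TTheory GRing.Theory Num.Theory.
Local Open Scope ring_scope.

Section Thiemard.
Variables (R : realType) (d : nat) (eps : R).

(* A box [x,y) in [0,1]^d is the pair (x,y); coordinates are indexed 1..d
   (values of the functions outside 1..d are irrelevant). *)
Definition box := ((nat -> R) * (nat -> R))%type.

Definition prodv (x : nat -> R) (a b : nat) : R := \prod_(a <= i < b) x i.

Definition Id_box : box := (fun _ => 0, fun _ => 1).

Definition W (P : box) : R := prodv P.2 1 d.+1 - prodv P.1 1 d.+1.

Definition delta (P : box) (j : nat) : R :=
  powR ((prodv P.2 1 d.+1 - eps) / (prodv P.1 1 j * prodv P.2 j d.+1))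
       ((d - j + 1)%:R^-1).

Definition gamma (P : box) (j : nat) (i : nat) : R :=
  if (i < j)%N then P.1 i else delta P j * P.2 i.

Definition child (P : box) (j k : nat) : box :=
  (fun i => if (i < k)%N then gamma P j i else P.1 i,
   fun i => if i == k then gamma P j k else P.2 i).

(* gen P t s : follow the index sequence s starting from the generated box P
   of type t; returns None if some box along the way is not generated
   (i.e. is not decomposed, or the index is not a valid child index). *)
Fixpoint gen (P : box) (t : nat) (s : seq nat) : option box :=
  match s with
  | [::] => Some P
  | k :: s' =>
      if (eps < W P) && (t <= k <= d)%N then gen (child P t k) k s' else None
  end.

(* Q^{(r)}_s for s in S^r (s = [::] encodes Q^{(0)}_0 = I^d);
   Q s = Some P  means  Q^{(r)}_s is generated and equals P. *)
Definition Q (s : seq nat) : option box := gen Id_box 1 s.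

Definition inS (r : nat) (s : seq nat) : bool :=
  [&& size s == r, sorted leq s & all (fun k => (1 <= k <= d)%N) s].

Definition is_height (h : nat) : Prop :=
  (W Id_box <= eps /\ h = 0%N) \/
  (eps < W Id_box /\ (1 <= h)%N /\
   (exists s P, inS h.-1 s /\ Q s = Some P /\ eps < W P) /\
   (forall h' s P, (1 <= h')%N -> inS h'.-1 s -> Q s = Some P -> eps < W P ->
      (h' <= h)%N)).

End Thiemard.

From mathcomp Require Import all_boot all_order all_algebra.
From mathcomp Require Import reals exp.
From mathcomp Require Import ring lra zify.
Import Order.TTheory GRing.Theory Num.Theory.
Local Open Scope ring_scope.
Set Implicit Arguments. Unset Strict Implicit. Unset Printing Implicit Defensive.

(* Every generated box P of type t has lower corner with vanishing last
   coordinate, so W(P) is the product w of its upper coordinates, and a child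
   Q_k has w(Q_k) = delta^P w(P).  Writing L = ln delta, the definition of
   delta gives (d-k+1) L(Q_k) = ln ((delta w - eps)/(w - eps)) + (d-k) L(P):
   the child's L is a weighted mean of L(P) and of a quantity C < L(P) which is
   increasing in w and in delta.  Hence, along two index sequences i <= j, the
   pairs (w, delta) stay ordered, a strict inequality in w or delta propagates
   to both quantities one level down, and a strict inequality i_nu < j_nu
   enters delta (through the weight d - k) at level nu and w one level later.
   Conversely, equal prefixes give equal boxes, and siblings have equal W. *)

Section Children.
Variables (R : realType) (d : nat) (eps : R).

Definition upper_vol (P : box R) : R := prodv P.2 1 d.+1.

Definition denom (P : box R) (t : nat) : R := prodv P.1 1 t * prodv P.2 t d.+1.

Lemma delta_def P t :
  delta d eps P t = powR ((upper_vol P - eps) / denom P t) ((d - t + 1)%:R^-1).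
Proof. by []. Qed.

Lemma prodv_split (x : nat -> R) a k b : (a <= k < b)%N ->
  prodv x a b = prodv x a k * x k * prodv x k.+1 b.
Proof.
move=> /andP[le_ak lt_kb]; rewrite /prodv (big_cat_nat le_ak (ltnW lt_kb)) /=.
by rewrite [\prod_(k <= i < b) _]big_ltn // mulrA.
Qed.

Lemma child_upper_vol P t k : (0 < t)%N -> (t <= k <= d)%N ->
  upper_vol (child d eps P t k) = delta d eps P t * upper_vol P.
Proof.
move=> t_gt0 /andP[le_tk le_kd].
have k_in : (1 <= k < d.+1)%N by lia.
rewrite /upper_vol !(prodv_split _ k_in) /= eqxx /gamma ltnNge le_tk /=.
have -> : prodv (fun i => if i == k then delta d eps P t * P.2 k else P.2 i) 1 k
          = prodv P.2 1 k.
  by apply: eq_big_nat => i /andP[_ lt_ik]; rewrite (ltn_eqF lt_ik).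
have -> : prodv (fun i => if i == k then delta d eps P t * P.2 k else P.2 i)
            k.+1 d.+1 = prodv P.2 k.+1 d.+1.
  by apply: eq_big_nat => i /andP[lt_ki _]; rewrite (gtn_eqF lt_ki).
ring.
Qed.

Lemma child_denom P t k : (0 < t)%N -> (t <= k <= d)%N ->
  denom (child d eps P t k) k = delta d eps P t ^+ (k - t).+1 * denom P t.
Proof.
move=> t_gt0 /andP[le_tk le_kd].
have k_in : (t <= k < d.+1)%N by lia.
rewrite /denom (prodv_split P.2 k_in) /=.
have -> : prodv (fun i => if (i < k)%N then gamma d eps P t i else P.1 i) 1 k =
          prodv P.1 1 t * (delta d eps P t ^+ (k - t) * prodv P.2 t k).
  rewrite /prodv (big_cat_nat t_gt0 le_tk) /=; congr (_ * _).
    apply: eq_big_nat => i /andP[_ lt_it].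
    by rewrite /gamma lt_it (leq_trans lt_it le_tk).
  rewrite -prodr_const_nat -big_split /=.
  by apply: eq_big_nat => i /andP[le_ti lt_ik]; rewrite /gamma lt_ik ltnNge le_ti.
rewrite [prodv _ k _]/prodv big_ltn ?ltnS // eqxx /gamma ltnNge le_tk /=.
have -> : \prod_(k.+1 <= i < d.+1)
            (if i == k then delta d eps P t * P.2 k else P.2 i)
          = \prod_(k.+1 <= i < d.+1) P.2 i.
  by apply: eq_big_nat => i /andP[lt_ki _]; rewrite (gtn_eqF lt_ki).
rewrite exprS /prodv; ring.
Qed.

Lemma gen_rcons P t s k : gen d eps P t (rcons s k) =
  if gen d eps P t s is Some P' then
    if (eps < W d P') && (last t s <= k <= d)%N
    then Some (child d eps P' (last t s) k) else None
  else None.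
Proof. by elim: s P t => [|a s IH] P t //=; case: ifP. Qed.

Lemma Q_rcons s k P' : Q d eps (rcons s k) = Some P' ->
  exists2 P, Q d eps s = Some P &
    [/\ eps < W d P, (last 1%N s <= k <= d)%N & P' = child d eps P (last 1%N s) k].
Proof.
rewrite /Q gen_rcons; case: gen => // P.
by case: ifP => // /andP[lt_eW k_in] [<-]; exists P.
Qed.

End Children.

Section Inequalities.
Variable R : realFieldType.

Lemma ratio_mono (e w1 w2 a1 a2 : R) : 0 < e -> e < w2 -> w2 <= w1 ->
  0 < a2 -> a2 <= a1 -> a1 < 1 -> e < a2 * w2 ->
  (a2 * w2 - e) / (w2 - e) <= (a1 * w1 - e) / (w1 - e) /\
  (w2 < w1 \/ a2 < a1 -> (a2 * w2 - e) / (w2 - e) < (a1 * w1 - e) / (w1 - e)).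
Proof.
move=> e_gt0 lt_ew2 le_w ha2 le_a lt_a1 lt_e.
have w2e_gt0 : 0 < w2 - e by lra.
have w1e_gt0 : 0 < w1 - e by lra.
have cross : (a1 * w1 - e) * (w2 - e) - (a2 * w2 - e) * (w1 - e) =
  (a1 - a2) * w1 * (w2 - e) + e * (1 - a2) * (w1 - w2) by ring.
have t1 : 0 <= (a1 - a2) * w1 * (w2 - e) by rewrite !mulr_ge0 //; lra.
have t2 : 0 <= e * (1 - a2) * (w1 - w2) by rewrite !mulr_ge0 //; lra.
split; first by rewrite ler_pdivrMr // mulrAC ler_pdivlMr //; lra.
move=> strict; rewrite ltr_pdivrMr // mulrAC ltr_pdivlMr //.
case: strict => strict.
  have : 0 < e * (1 - a2) * (w1 - w2) by rewrite !mulr_gt0 //; lra.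
  lra.
have : 0 < (a1 - a2) * w1 * (w2 - e) by rewrite !mulr_gt0 //; lra.
lra.
Qed.

Lemma ratio_lt (e w a : R) : 0 < e -> e < w -> a < 1 ->
  (a * w - e) / (w - e) < a.
Proof.
move=> e_gt0 lt_ew lt_a1; rewrite ltr_pdivrMr; last lra.
have : 0 < (1 - a) * e by rewrite mulr_gt0 //; lra.
lra.
Qed.

Lemma ratio_gt0 (e w a : R) : e < w -> e < a * w -> 0 < (a * w - e) / (w - e).
Proof. by move=> lt_ew lt_eaw; rewrite divr_gt0 //; lra. Qed.

(* X = (C + n L) / (n + 1) moves towards C < L as the weight n decreases. *)
Lemma weighted_mean_mono (n1 n2 C1 C2 L1 L2 X1 X2 : R) :
  0 <= n2 -> n2 <= n1 -> C2 <= C1 -> L2 <= L1 -> C2 < L2 ->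
  (n1 + 1) * X1 = C1 + n1 * L1 -> (n2 + 1) * X2 = C2 + n2 * L2 ->
  X2 <= X1 /\ (C2 < C1 \/ n2 < n1 -> X2 < X1).
Proof.
move=> n2_ge0 le_n le_C le_L lt_CL def_X1 def_X2.
have diff : (n2 + 1) * (n1 + 1) * (X1 - X2) =
    (C1 - C2) * (n2 + 1) + n1 * (n2 + 1) * (L1 - L2) + (n1 - n2) * (L2 - C2).
  have -> : (n2 + 1) * (n1 + 1) * (X1 - X2) =
            (n2 + 1) * ((n1 + 1) * X1) - (n1 + 1) * ((n2 + 1) * X2) by ring.
  by rewrite def_X1 def_X2; ring.
have den_gt0 : 0 < (n2 + 1) * (n1 + 1) by rewrite mulr_gt0 //; lra.
have t1 : 0 <= (C1 - C2) * (n2 + 1) by rewrite mulr_ge0 //; lra.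
have t2 : 0 <= n1 * (n2 + 1) * (L1 - L2) by rewrite !mulr_ge0 //; lra.
have t3 : 0 <= (n1 - n2) * (L2 - C2) by rewrite mulr_ge0 //; lra.
split.
  have : 0 <= (n2 + 1) * (n1 + 1) * (X1 - X2) by lra.
  by rewrite pmulr_rge0 //; lra.
move=> strict; have : 0 < (n2 + 1) * (n1 + 1) * (X1 - X2).
  case: strict => strict.
    have : 0 < (C1 - C2) * (n2 + 1) by rewrite mulr_gt0 //; lra.
    lra.
  have : 0 < (n1 - n2) * (L2 - C2) by rewrite mulr_gt0 //; lra.
  lra.
by rewrite pmulr_rgt0 //; lra.
Qed.

End Inequalities.

Lemma nth_rcons_lt (T : Type) (x0 : T) s k nu : (nu < size s)%N ->
  nth x0 (rcons s k) nu = nth x0 s nu.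
Proof. by move=> lt_nu; rewrite nth_rcons lt_nu. Qed.

Lemma eq_or_nth_lt (s1 s2 : seq nat) : size s1 = size s2 ->
  (forall nu, (nu < size s1)%N -> (nth 0%N s1 nu <= nth 0%N s2 nu)%N) ->
  s1 = s2 \/ exists nu, (nu < size s1)%N /\ (nth 0%N s1 nu < nth 0%N s2 nu)%N.
Proof.
elim: s1 s2 => [|a s1 IH] [|b s2] //=; first by left.
move=> [size_eq] le_s.
have [lt_ab|] := ltnP a b; first by right; exists 0%N.
move=> le_ba; have eq_ab : a = b by apply/eqP; rewrite eqn_leq le_ba (le_s 0%N).
have [->|[nu [lt_nu strict]]] := IH s2 size_eq (fun nu => le_s nu.+1).
  by left; rewrite eq_ab.
by right; exists nu.+1.
Qed.

Section GeneratedBoxes.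
Variables (R : realType) (d : nat) (eps : R).
Hypotheses (eps_gt0 : 0 < eps) (d_gt0 : (0 < d)%N).

Local Notation upper_vol := (upper_vol d).
Local Notation denom := (denom d).

(* The last condition is what makes delta^P < 1. *)
Definition box_inv (P : box R) (t : nat) : Prop :=
  [/\ (0 < t)%N, P.1 d = 0, 0 < denom P t & upper_vol P - eps < denom P t].

Lemma W_box_inv P t : box_inv P t -> W d P = upper_vol P.
Proof.
case=> _ P1d0 _ _; have d_in : (1 <= d < d.+1)%N by rewrite d_gt0 ltnSn.
by rewrite /W (prodv_split P.1 d_in) P1d0 mulr0 mul0r subr0.
Qed.

Lemma delta_gt0 P t : box_inv P t -> eps < upper_vol P -> 0 < delta d eps P t.
Proof.
by case=> _ _ denom_gt0 _ lt_ew; rewrite delta_def powR_gt0 // divr_gt0 //; lra.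
Qed.

Lemma ln_delta P t : box_inv P t -> eps < upper_vol P ->
  (d - t + 1)%:R * ln (delta d eps P t) = ln (upper_vol P - eps) - ln (denom P t).
Proof.
case=> _ _ denom_gt0 _ lt_ew.
rewrite delta_def ln_powR mulrA mulfV ?mul1r ?pnatr_eq0 ?addn1 //.
by rewrite ln_div // posrE; lra.
Qed.

Lemma delta_lt1 P t : box_inv P t -> eps < upper_vol P -> delta d eps P t < 1.
Proof.
move=> Pinv lt_ew; have [_ _ denom_gt0 lt_denom] := Pinv.
have dP_gt0 := delta_gt0 Pinv lt_ew.
suff : ln (delta d eps P t) < 0 by rewrite -ln1 ltr_ln ?posrE.
have : ln (upper_vol P - eps) < ln (denom P t) by rewrite ltr_ln ?posrE //; lra.
rewrite -subr_lt0 -ln_delta // pmulr_rlt0 //.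
by rewrite ltr0n addn1.
Qed.

Lemma ln_child_denom P t k : box_inv P t -> eps < upper_vol P ->
  (t <= k <= d)%N ->
  ln (denom (child d eps P t k) k) =
  ln (upper_vol P - eps) - (d - k)%:R * ln (delta d eps P t).
Proof.
move=> Pinv lt_ew k_in; have [t_gt0 _ denom_gt0 _] := Pinv.
have dP_gt0 := delta_gt0 Pinv lt_ew.
have split_d : (d - t + 1)%:R = (k - t).+1%:R + (d - k)%:R :> R.
  by rewrite -natrD; congr (_%:R); lia.
have := ln_delta Pinv lt_ew; rewrite split_d mulrDl.
rewrite child_denom // lnM ?posrE ?exprn_gt0 // lnXn // -mulr_natl.
lra.
Qed.

Lemma box_inv_child P t k : box_inv P t -> eps < upper_vol P -> (t <= k <= d)%N ->
  box_inv (child d eps P t k) k.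
Proof.
move=> Pinv lt_ew k_in; have [t_gt0 P1d0 denom_gt0 _] := Pinv.
have /andP[le_tk le_kd] := k_in.
have dP_gt0 := delta_gt0 Pinv lt_ew; have dP_lt1 := delta_lt1 Pinv lt_ew.
have denom_child_gt0 : 0 < denom (child d eps P t k) k.
  by rewrite child_denom // mulr_gt0 // exprn_gt0.
split => //; first by rewrite (leq_trans t_gt0 le_tk).
  by rewrite /= ltnNge le_kd.
have shrink : delta d eps P t * upper_vol P < upper_vol P.
  by rewrite gtr_pMl // (lt_trans eps_gt0 lt_ew).
suff : upper_vol P - eps <= denom (child d eps P t k) k.
  by rewrite child_upper_vol //; lra.
rewrite -ler_ln ?posrE //; last lra.
have : ln (delta d eps P t) < 0 by rewrite ln_lt0 ?dP_gt0.
have : 0 <= (d - k)%:R :> R by [].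
rewrite ln_child_denom //; nra.
Qed.

Lemma ln_delta_child P t k : box_inv P t -> eps < upper_vol P ->
  (t <= k <= d)%N -> eps < upper_vol (child d eps P t k) ->
  ((d - k)%:R + 1) * ln (delta d eps (child d eps P t k) k) =
  ln ((delta d eps P t * upper_vol P - eps) / (upper_vol P - eps))
  + (d - k)%:R * ln (delta d eps P t).
Proof.
move=> Pinv lt_ew k_in lt_ew'; have [t_gt0 _ _ _] := Pinv.
have := ln_delta (box_inv_child Pinv lt_ew k_in) lt_ew'.
rewrite natrD ln_child_denom // child_upper_vol // => ->.
rewrite child_upper_vol // in lt_ew'.
rewrite ln_div ?posrE; lra.
Qed.

Lemma child_upper_vol_mono P1 t1 P2 t2 k1 k2 :
  box_inv P1 t1 -> box_inv P2 t2 -> eps < upper_vol P2 ->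
  upper_vol P2 <= upper_vol P1 -> delta d eps P2 t2 <= delta d eps P1 t1 ->
  (t1 <= k1 <= d)%N -> (t2 <= k2 <= d)%N ->
  upper_vol (child d eps P2 t2 k2) <= upper_vol (child d eps P1 t1 k1) /\
  (upper_vol P2 < upper_vol P1 \/ delta d eps P2 t2 < delta d eps P1 t1 ->
   upper_vol (child d eps P2 t2 k2) < upper_vol (child d eps P1 t1 k1)).
Proof.
move=> P1inv P2inv lt_ew2 le_w le_delta k1_in k2_in.
have [t1_gt0 _ _ _] := P1inv; have [t2_gt0 _ _ _] := P2inv.
have d2_gt0 := delta_gt0 P2inv lt_ew2.
have d1_gt0 := lt_le_trans d2_gt0 le_delta.
have w2_gt0 := lt_trans eps_gt0 lt_ew2; have w1_gt0 := lt_le_trans w2_gt0 le_w.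
rewrite !child_upper_vol //; split=> [|[lt_w|lt_delta]].
- exact: ler_pM (ltW d2_gt0) (ltW w2_gt0) le_delta le_w.
- apply: (@lt_le_trans _ _ (delta d eps P2 t2 * upper_vol P1)).
    by rewrite ltr_pM2l.
  by rewrite ler_pM2r.
- apply: (@lt_le_trans _ _ (delta d eps P1 t1 * upper_vol P2)).
    by rewrite ltr_pM2r.
  by rewrite ler_pM2l.
Qed.

Lemma child_delta_mono P1 t1 P2 t2 k1 k2 :
  box_inv P1 t1 -> box_inv P2 t2 -> eps < upper_vol P2 ->
  upper_vol P2 <= upper_vol P1 -> delta d eps P2 t2 <= delta d eps P1 t1 ->
  (t1 <= k1 <= d)%N -> (t2 <= k2 <= d)%N -> (k1 <= k2)%N ->
  eps < upper_vol (child d eps P2 t2 k2) ->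
  delta d eps (child d eps P2 t2 k2) k2 <= delta d eps (child d eps P1 t1 k1) k1 /\
  ([\/ upper_vol P2 < upper_vol P1, delta d eps P2 t2 < delta d eps P1 t1
     | (k1 < k2)%N] ->
   delta d eps (child d eps P2 t2 k2) k2 < delta d eps (child d eps P1 t1 k1) k1).
Proof.
move=> P1inv P2inv lt_ew2 le_w le_delta k1_in k2_in le_k lt_ew2'.
have lt_ew1 : eps < upper_vol P1 by lra.
have [t1_gt0 _ _ _] := P1inv; have [t2_gt0 _ _ _] := P2inv.
have [le_w' _] := child_upper_vol_mono P1inv P2inv lt_ew2 le_w le_delta k1_in k2_in.
have lt_ew1' : eps < upper_vol (child d eps P1 t1 k1) by lra.
have X1 := ln_delta_child P1inv lt_ew1 k1_in lt_ew1'.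
have X2 := ln_delta_child P2inv lt_ew2 k2_in lt_ew2'.
have d1_gt0 := delta_gt0 P1inv lt_ew1; have d2_gt0 := delta_gt0 P2inv lt_ew2.
have d1_lt1 := delta_lt1 P1inv lt_ew1; have d2_lt1 := delta_lt1 P2inv lt_ew2.
have d1'_gt0 := delta_gt0 (box_inv_child P1inv lt_ew1 k1_in) lt_ew1'.
have d2'_gt0 := delta_gt0 (box_inv_child P2inv lt_ew2 k2_in) lt_ew2'.
rewrite child_upper_vol // in lt_ew1'; rewrite child_upper_vol // in lt_ew2'.
have [le_ratio lt_ratio] :=
  ratio_mono eps_gt0 lt_ew2 le_w d2_gt0 le_delta d1_lt1 lt_ew2'.
have ratio1_gt0 := ratio_gt0 lt_ew1 lt_ew1'.
have ratio2_gt0 := ratio_gt0 lt_ew2 lt_ew2'.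
have le_C := le_ratio; rewrite -ler_ln ?posrE // in le_C.
have lt_CL : ln ((delta d eps P2 t2 * upper_vol P2 - eps) / (upper_vol P2 - eps))
             < ln (delta d eps P2 t2) by rewrite ltr_ln ?posrE // ratio_lt.
have le_L := le_delta; rewrite -ler_ln ?posrE // in le_L.
have le_n : (d - k2)%:R <= (d - k1)%:R :> R by rewrite ler_nat leq_sub2l.
have [le_X lt_X] := weighted_mean_mono (ler0n _ _) le_n le_C le_L lt_CL X1 X2.
split; first by rewrite -ler_ln ?posrE.
move=> strict; rewrite -ltr_ln ?posrE //; apply: lt_X.
case: strict => [lt_w|lt_delta|lt_k].
- by left; rewrite ltr_ln ?posrE //; apply: lt_ratio; left.
- by left; rewrite ltr_ln ?posrE //; apply: lt_ratio; right.
- by right; rewrite ltr_nat ltn_sub2lE ?(andP k2_in).2.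
Qed.

Lemma box_inv_Q s P : Q d eps s = Some P -> box_inv P (last 1%N s).
Proof.
elim/last_ind: s P => [|s k IH] P.
  move=> [<-]; rewrite /box_inv /denom /upper_vol /prodv big_geq //.
  by rewrite prodr_const_nat expr1n mul1r; split; rewrite // ltrBlDr ltrDl.
move=> /Q_rcons[P' /IH P'inv [lt_eW k_in ->]]; rewrite last_rcons.
by apply: box_inv_child; rewrite -?(W_box_inv P'inv).
Qed.

Lemma Q_mono n s1 s2 P1 P2 : size s1 = n -> size s2 = n ->
  (forall nu, (nu < n)%N -> (nth 0%N s1 nu <= nth 0%N s2 nu)%N) ->
  Q d eps s1 = Some P1 -> Q d eps s2 = Some P2 ->
  [/\ upper_vol P2 <= upper_vol P1,
      (exists nu, (nu < n.-1)%N /\ (nth 0%N s1 nu < nth 0%N s2 nu)%N) ->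
        upper_vol P2 < upper_vol P1
    & eps < upper_vol P2 ->
        delta d eps P2 (last 1%N s2) <= delta d eps P1 (last 1%N s1) /\
        ((exists nu, (nu < n)%N /\ (nth 0%N s1 nu < nth 0%N s2 nu)%N) ->
          delta d eps P2 (last 1%N s2) < delta d eps P1 (last 1%N s1))].
Proof.
elim: n s1 s2 P1 P2 => [|n IH] s1 s2 P1 P2.
  move=> /size0nil -> /size0nil -> _ [<-] [<-].
  by split=> [|[nu []]|_] //; split=> [|[nu []]].
case/lastP: s1 => [//|s1 k1]; case/lastP: s2 => [//|s2 k2].
rewrite !size_rcons => -[size1] [size2] le_s.
have le_s' nu : (nu < n)%N -> (nth 0%N s1 nu <= nth 0%N s2 nu)%N.
  by move=> lt_nu; have := le_s nu (ltnW lt_nu); rewrite !nth_rcons_lt ?size1 ?size2.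
have le_k : (k1 <= k2)%N.
  by have := le_s n (ltnSn n); rewrite !nth_rcons size1 size2 ltnn eqxx.
have nth_strict nu : (nu < n)%N ->
    (nth 0%N (rcons s1 k1) nu < nth 0%N (rcons s2 k2) nu)%N = (nth 0%N s1 nu < nth 0%N s2 nu)%N.
  by move=> lt_nu; rewrite !nth_rcons_lt ?size1 ?size2.
move=> /Q_rcons[P1' QP1' [lt_eW1 k1_in ->]] /Q_rcons[P2' QP2' [lt_eW2 k2_in ->]].
have P1inv := box_inv_Q QP1'; have P2inv := box_inv_Q QP2'.
rewrite (W_box_inv P1inv) in lt_eW1; rewrite (W_box_inv P2inv) in lt_eW2.
have [le_w lt_w /(_ lt_eW2)[le_delta lt_delta]] := IH _ _ _ _ size1 size2 le_s' QP1' QP2'.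
have [le_w' lt_w'] := child_upper_vol_mono P1inv P2inv lt_eW2 le_w le_delta k1_in k2_in.
rewrite !last_rcons; split => // [[nu [lt_nu strict]]|lt_ew2'].
  by apply: lt_w'; right; apply: lt_delta; exists nu; rewrite -nth_strict.
have [le_delta' lt_delta'] :=
  child_delta_mono P1inv P2inv lt_eW2 le_w le_delta k1_in k2_in le_k lt_ew2'.
split => // -[nu [lt_nu strict]]; apply: lt_delta'.
have [lt_nun|] := ltnP nu n.
  by apply: Or32; apply: lt_delta; exists nu; rewrite -nth_strict.
move=> le_nnu; have eq_nu : nu = n by lia.
by move: strict; rewrite eq_nu !nth_rcons size1 size2 ltnn eqxx => ?; apply: Or33.
Qed.

Lemma upper_vol_Q_sibling s k1 k2 P1 P2 :
  Q d eps (rcons s k1) = Some P1 -> Q d eps (rcons s k2) = Some P2 ->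
  upper_vol P1 = upper_vol P2.
Proof.
move=> /Q_rcons[P QP [_ k1_in ->]] /Q_rcons[P' QP' [_ k2_in ->]].
move: QP'; rewrite QP => -[<-]; have [t_gt0 _ _ _] := box_inv_Q QP.
by rewrite !child_upper_vol.
Qed.

Lemma upper_vol_lt_nth_lt n s1 s2 P1 P2 : size s1 = n -> size s2 = n ->
  (forall nu, (nu < n)%N -> (nth 0%N s1 nu <= nth 0%N s2 nu)%N) ->
  Q d eps s1 = Some P1 -> Q d eps s2 = Some P2 -> upper_vol P2 < upper_vol P1 ->
  exists nu, (nu < n.-1)%N /\ (nth 0%N s1 nu < nth 0%N s2 nu)%N.
Proof.
case: n => [|n]; first by move=> /size0nil -> /size0nil -> _ [<-] [<-]; rewrite ltxx.
case/lastP: s1 => [//|s1 k1]; case/lastP: s2 => [//|s2 k2].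
rewrite !size_rcons => -[size1] [size2] le_s QP1 QP2 lt_w.
have le_s' nu : (nu < size s1)%N -> (nth 0%N s1 nu <= nth 0%N s2 nu)%N.
  rewrite size1 => lt_nu; have := le_s nu (ltnW lt_nu).
  by rewrite !nth_rcons_lt ?size1 ?size2.
have [eq_s|[nu [lt_nu strict]]] := eq_or_nth_lt (etrans size1 (esym size2)) le_s'.
  by rewrite eq_s in QP1; rewrite (upper_vol_Q_sibling QP1 QP2) ltxx in lt_w.
rewrite size1 in lt_nu.
by exists nu; split=> //; rewrite !nth_rcons_lt ?size1 ?size2.
Qed.

End GeneratedBoxes.

Lemma delta_lt_nth_lt (R : realType) d (eps : R) n s1 s2 P1 P2 :
  size s1 = n -> size s2 = n ->
  (forall nu, (nu < n)%N -> (nth 0%N s1 nu <= nth 0%N s2 nu)%N) ->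
  Q d eps s1 = Some P1 -> Q d eps s2 = Some P2 ->
  delta d eps P2 (last 1%N s2) < delta d eps P1 (last 1%N s1) ->
  exists nu, (nu < n)%N /\ (nth 0%N s1 nu < nth 0%N s2 nu)%N.
Proof.
move=> size1 size2 le_s QP1 QP2 lt_delta.
have le_s' nu : (nu < size s1)%N -> (nth 0%N s1 nu <= nth 0%N s2 nu)%N.
  by rewrite size1; apply: le_s.
have [eq_s|] := eq_or_nth_lt (etrans size1 (esym size2)) le_s'; last by rewrite size1.
by move: QP1 lt_delta; rewrite eq_s QP2 => -[->]; rewrite ltxx.
Qed.

Theorem mainTheorem2 (R : realType) (d : nat) (eps : R)
  (heps0 : 0 < eps) (heps1 : eps <= 1) (h : nat) (hh : is_height d eps h)
  (r : nat) (hr1 : (1 <= r)%N) (hrh : (r <= h)%N)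
  (i j : seq nat) (hi : inS d r i) (hj : inS d r j)
  (hij : forall nu, (nu < r)%N -> (nth 0%N i nu <= nth 0%N j nu)%N)
  (Pi Pj : box R) (hPi : Q d eps i = Some Pi) (hPj : Q d eps j = Some Pj) :
  W d Pj <= W d Pi /\
  (eps < W d Pj -> delta d eps Pj (last 0%N j) <= delta d eps Pi (last 0%N i)) /\
  (W d Pj < W d Pi <->
     exists nu, (nu < r.-1)%N /\ (nth 0%N i nu < nth 0%N j nu)%N) /\
  (eps < W d Pj ->
     (delta d eps Pj (last 0%N j) < delta d eps Pi (last 0%N i) <->
      exists nu, (nu < r)%N /\ (nth 0%N i nu < nth 0%N j nu)%N)).
Proof.
case/and3P: hi => /eqP size_i _ /allP i_in; case/and3P: hj => /eqP size_j _ _.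
have d_gt0 : (0 < d)%N.
  have i_nonnil : (0 < size i)%N by rewrite size_i.
  by have /andP[? ?] := i_in _ (mem_nth 0%N i_nonnil); lia.
have last_i : last 0%N i = last 1%N i by move: size_i hr1; case: (i) => [<-|].
have last_j : last 0%N j = last 1%N j by move: size_j hr1; case: (j) => [<-|].
have Pi_inv := box_inv_Q heps0 d_gt0 hPi; have Pj_inv := box_inv_Q heps0 d_gt0 hPj.
rewrite last_i last_j (W_box_inv d_gt0 Pi_inv) (W_box_inv d_gt0 Pj_inv).
have [le_w lt_w le_delta] := Q_mono heps0 d_gt0 size_i size_j hij hPi hPj.
split=> //; split=> [/le_delta[] //|]; split.
  by split=> [/(upper_vol_lt_nth_lt heps0 d_gt0 size_i size_j hij hPi hPj)|/lt_w].
move=> /le_delta[_ lt_delta].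
by split=> [/(delta_lt_nth_lt size_i size_j hij hPi hPj)|/lt_delta].
Qed.
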